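(* Let $k,d,h$ be positive integers and let $C_h$ be a chain of size $h$. If $\mathcal{F}\subset[k]^d$ does not contain a strong copy of $C_h$, then $|\mathcal{F}|\le d(h-1)k^{d-1}$.
   Context: $[k]^d=\{1,\dots,k\}^d$ with the coordinatewise order $\preceq$. For a poset $Q$, a set $Q'\subset[k]^n$ is a strong copy of $Q$ if it is an induced copy of $Q$ (there is a bijection $\pi:Q\to Q'$ with $x\le_Q y\iff \pi(x)\preceq\pi(y)$) and moreover whenever $\mathbf x,\mathbf y\in Q'$ with $\mathbf x\prec\mathbf y$, we have $\mathbf x(i)<\mathbf y(i)$ for every coordinate $i\in[n]$ (incomparable pairs may share coordinates). *)

From mathcomp Require Import all_boot.
Set Implicit Arguments. Unset Strict Implicit. Unset Printing Implicit Defensive.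

(* Points of [k]^d, with [k] represented by 'I_k = {0,...,k-1}
   (order-isomorphic to {1,...,k}). *)
Definition grid (d k : nat) := {ffun 'I_d -> 'I_k}.

Definition gle d k (x y : grid d k) : bool := [forall i, x i <= y i].
Definition glt d k (x y : grid d k) : bool := gle x y && (x != y).

(* Q' ⊆ F is a strong copy of the finite poset (P, leP):
   pi : P -> Q' bijection (injective map into F with image Q'),
   induced (order embedding), and comparable pairs strictly ordered
   in every coordinate. *)
Definition has_strong_copy (P : finType) (leP : rel P) d k (F : {set grid d k}) : Prop :=
  exists pi : P -> grid d k,
    [/\ injective pi,
        (forall p, pi p \in F),
        (forall p q, leP p q <-> gle (pi p) (pi q)) &
        (forall p q, glt (pi p) (pi q) -> forall i, pi p i < pi q i)].

Definition chain_le (h : nat) : rel 'I_h := fun a b => (a <= b)%N.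

(* Attach to x ∈ [k]^d the index i of a minimal coordinate of x and the
   offsets x(j) - x(i) of the other coordinates: d * k^(d-1) possible keys.
   Points with the same key differ by a multiple of the all-ones vector, so
   any two of them are strictly ordered in every coordinate, and a fiber of
   size h would be a strong copy of C_h.  Hence every fiber has at most
   h - 1 points. *)
From mathcomp Require Import all_boot.
Set Implicit Arguments. Unset Strict Implicit.

Definition strong_lt d k (x y : grid d k) : bool := [forall i, x i < y i].

Lemma card_le_fibers (T U : finType) (f : T -> U) (F : {set T}) m :
  (forall u, #|[set x in F | f x == u]| <= m) -> #|F| <= #|U| * m.
Proof.
move=> Hfib; rewrite -sum1_card (partition_big f predT) //=.
rewrite -sum_nat_const; apply: leq_sum => u _.
by have := Hfib u; rewrite cardsE sum1_card.
Qed.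

Section StrongChains.

Variables (d k h : nat) (F : {set grid d k}).
Hypothesis d_gt0 : 0 < d.

Lemma strong_lt_irr (x : grid d k) : ~~ strong_lt x x.
Proof. by apply/forallP => /(_ (Ordinal d_gt0)); rewrite ltnn. Qed.

Lemma strong_lt_gle (x y : grid d k) : strong_lt x y -> gle x y.
Proof. by move=> /forallP lt_xy; apply/forallP => i; exact: ltnW. Qed.

Lemma strong_lt_ngle (x y : grid d k) : strong_lt x y -> ~~ gle y x.
Proof.
move=> /forallP lt_xy; apply/forallP => /(_ (Ordinal d_gt0)).
by rewrite leqNgt lt_xy.
Qed.

Lemma strong_chain_copy (pi : 'I_h -> grid d k) :
  (forall p, pi p \in F) ->
  (forall p q : 'I_h, p < q -> strong_lt (pi p) (pi q)) ->
  has_strong_copy (@chain_le h) F.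
Proof.
move=> piF pi_lt; exists pi; split=> //.
- move=> p q eq_pi; apply: val_inj; case: (ltngtP p q) => // [pq|qp].
  + by have := pi_lt _ _ pq; rewrite eq_pi (negbTE (strong_lt_irr _)).
  + by have := pi_lt _ _ qp; rewrite eq_pi (negbTE (strong_lt_irr _)).
- move=> p q; rewrite /chain_le; split.
  + rewrite leq_eqVlt => /orP [/eqP/val_inj ->|pq].
      by apply/forallP.
    exact/strong_lt_gle/pi_lt.
  + by apply: contraTT; rewrite -ltnNge => /pi_lt/strong_lt_ngle.
- move=> p q /andP [le_pq ne_pq]; apply/forallP.
  case: (ltngtP p q) => [pq|qp|/val_inj eq_pq]; first exact: pi_lt.
  + by have := strong_lt_ngle (pi_lt _ _ qp); rewrite le_pq.
  + by rewrite eq_pq eqxx in ne_pq.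
Qed.

(* Sorting [A] along coordinate [c] turns the hypothesis into a strong chain. *)
Lemma strong_copy_of_coord_chain (A : {set grid d k}) (c : 'I_d) :
  0 < k -> A \subset F ->
  {in A &, forall x y : grid d k, x c <= y c -> x != y -> strong_lt x y} ->
  h <= #|A| -> has_strong_copy (@chain_le h) F.
Proof.
move=> k_gt0 sAF A_lt le_hA.
pose r := fun x y : grid d k => x c <= y c.
pose l := sort r (enum A).
have size_l : size l = #|A| by rewrite size_sort cardE.
have uniq_l : uniq l by rewrite sort_uniq enum_uniq.
have sorted_l : sorted r l by apply: sort_sorted => x y; exact: leq_total.
have lt_l (p : 'I_h) : p < size l by rewrite size_l (leq_trans (ltn_ord p)).
pose x0 : grid d k := [ffun => Ordinal k_gt0]. (* the only use of [0 < k] *)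
pose pi (p : 'I_h) := nth x0 l p.
have piA p : pi p \in A by rewrite -mem_enum -(mem_sort r) mem_nth.
apply: (strong_chain_copy (pi := pi)) => [p|p q pq]; first exact: (subsetP sAF).
apply: A_lt => //.
  have r_trans : transitive r by move=> x y z; exact: leq_trans.
  by apply: (sorted_ltn_nth r_trans) => //; rewrite inE.
by rewrite nth_uniq // neq_ltn pq.
Qed.

End StrongChains.

Section DiagonalKey.

Variables d k : nat.

Definition min_coord (x : grid d.+1 k) : 'I_d.+1 := [arg min_(i < ord0) x i].

Lemma min_coordP (x : grid d.+1 k) j : x (min_coord x) <= x j.
Proof. by rewrite /min_coord; case: arg_minnP => // i _; apply. Qed.

Definition coord_offset (x : grid d.+1 k) j : 'I_k :=
  Ordinal (leq_ltn_trans (leq_subr (x (min_coord x)) (x j)) (ltn_ord (x j))).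

Definition diag_key (x : grid d.+1 k) : 'I_d.+1 * {ffun 'I_d -> 'I_k} :=
  (min_coord x, [ffun j => coord_offset x (lift (min_coord x) j)]).

Lemma diag_key_offset (x y : grid d.+1 k) : diag_key x = diag_key y ->
  min_coord x = min_coord y /\
  forall j, x j - x (min_coord x) = y j - y (min_coord x).
Proof.
case=> eq_min eq_off; split=> // j.
case: (unliftP (min_coord x) j) => [j' ->|->]; last by rewrite !subnn.
have := congr1 (fun f : {ffun 'I_d -> 'I_k} => val (f j')) eq_off.
by rewrite !ffunE /= -eq_min.
Qed.

Lemma diag_key_strong_lt (x y : grid d.+1 k) : diag_key x = diag_key y ->
  x (min_coord x) <= y (min_coord x) -> x != y -> strong_lt x y.
Proof.
move=> /diag_key_offset [eq_min eq_off] le_xy ne_xy.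
have min_x := min_coordP x; have min_y := min_coordP y; rewrite -eq_min in min_y.
have lt_xy : x (min_coord x) < y (min_coord x).
  rewrite ltn_neqAle le_xy andbT; apply: contraNneq ne_xy => eq_xy.
  apply/eqP/ffunP => j; apply: ord_inj.
  by rewrite -(subnK (min_x j)) eq_off eq_xy subnK.
apply/forallP => j.
by rewrite -(subnK (min_x j)) -(subnK (min_y j)) eq_off ltn_add2l.
Qed.

End DiagonalKey.

Theorem lemma3p3 (k d h : nat) (hk : 0 < k) (hd : 0 < d) (hh : 0 < h)
    (F : {set grid d k}) :
  ~ has_strong_copy (@chain_le h) F ->
  #|F| <= d * (h - 1) * k ^ (d - 1).
Proof.
case: d hd F => // d _ F no_copy.
have fiber_small s : #|[set x in F | diag_key x == s]| <= h - 1.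
  rewrite leqNgt subn1 prednK //; apply/negP => le_h_fib; apply: no_copy.
  apply: (strong_copy_of_coord_chain (ltn0Sn d) (c := s.1) hk _ _ le_h_fib).
    by apply/subsetP => x /setIdP [].
  move=> x y /setIdP [_ /eqP key_x] /setIdP [_ /eqP key_y].
  have -> : s.1 = min_coord x by rewrite -key_x.
  by apply: diag_key_strong_lt; rewrite key_x key_y.
apply: leq_trans (card_le_fibers fiber_small) _.
by rewrite card_prod card_ffun !card_ord subSS subn0 mulnAC.
Qed.
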